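(* Let $N\ge2$, $L^x,L^y>0$, and for each box $k\in\{1,\dots,N\}$ let constants $lb^x_k,lb^y_k>0$ be given. Let $F$ be the set of $(c,\ell,z,d)$, where $c=(c^s_k)$, $\ell=(\ell^s_k)$ for $k\in\{1,\dots,N\}$, $s\in\{x,y\}$, $z=(z^s_{p,q})\in\{0,1\}$ for all $s\in\{x,y\}$ and ordered pairs of distinct boxes $(p,q)$, and $d=(d^s_{i,j})$ with $d^s_{i,j}=d^s_{j,i}$ for unordered pairs, satisfying for every pair of distinct boxes $i,j$, every $s\in\{x,y\}$ and every $(p,q)\in\{(i,j),(j,i)\}$: \begin{align*} &\tfrac12\ell^s_p+lb^s_q z^s_{q,p}\le c^s_p\le L^s-\tfrac12\ell^s_p-lb^s_q z^s_{p,q},\qquad c^s_p+\tfrac12\ell^s_p\le c^s_q-\tfrac12\ell^s_q+L^s(1-z^s_{p,q}),\qquad \ell^s_p\ge lb^s_p,\\ &z^x_{i,j}+z^x_{j,i}+z^y_{i,j}+z^y_{j,i}\ge1,\qquad z^s_{i,j}+z^s_{j,i}\le1,\\ &c^s_p+\tfrac12\ell^s_p+L^s z^s_{p,q}\ge c^s_q-\tfrac12\ell^s_q+(lb^s_p+lb^s_q)(z^s_{i,j}+z^s_{j,i}),\\ &d^s_{i,j}\ge c^s_i-c^s_j,\qquad d^s_{i,j}\ge c^s_j-c^s_i. \end{align*} Fix distinct boxes $i,j$, an integer $m\ge1$, and distinct boxes $t^0=i,t^1,\dots,t^m,t^{m+1}=j$ (the path $P$). Fix $s\in\{x,y\}$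 and $\{p,q\}=\{i,j\}$. Define $\mathscr{M}^s_P(z)=1+\sum_{\xi=1}^{m+1}(z^s_{t^{\xi-1},t^\xi}-1)$ and $\gamma_P=\sum_{\xi=1}^m lb^s_{t^\xi}$. Then every point of $F$ satisfies \begin{align*} d^s_{i,j}&\ge\tfrac12(\ell^s_i+\ell^s_j)-L^s(1-z^s_{i,j}-z^s_{j,i})+\gamma_P\mathscr{M}^s_P(z),\\ d^s_{i,j}&\ge c^s_p-c^s_q+\ell^s_p+lb^s_q(z^s_{i,j}+z^s_{j,i})-L^s(1-z^s_{p,q})+\gamma_P\mathscr{M}^s_P(z),\\ d^s_{i,j}&\ge c^s_i-c^s_j+(lb^s_i+lb^s_j)z^s_{i,j}+\gamma_P\mathscr{M}^s_P(z),\\ 2d^s_{i,j}&\ge\ell^s_p+lb^s_q(z^s_{i,j}+z^s_{j,i})-L^s(1-z^s_{i,j}-z^s_{j,i})+2\gamma_P\mathscr{M}^s_P(z),\\ \tfrac12\ell^s_j+lb^s_i z^s_{i,j}+\gamma_P\mathscr{M}^s_P(z)&\le c^s_j,\\ c^s_i+\gamma_P\mathscr{M}^s_P(z)&\le L^s-\tfrac12\ell^s_i-lb^s_j z^s_{i,j},\\ c^s_i+\tfrac12\ell^s_i+\gamma_P\mathscr{M}^s_P(z)&\le c^s_j-\tfrac12\ell^s_j+L^s(1-z^s_{i,j}). \end{align*}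
   Context: Box $k$ has center $(c^x_k,c^y_k)$ and side lengths $(\ell^x_k,\ell^y_k)$. The set $F$ is the $N$-box refined unary formulation (the pairwise refined unary formulations for all pairs, sharing variables) augmented with the standard linearization variables $d^s_{i,j}$ of the Manhattan objective $|c^s_i-c^s_j|$. In the paper $lb^s_k=\beta_k/ub^s_k$ with $ub^s_k=\min\{\sqrt{\alpha_k\beta_k},L^s\}$. *)

(* Directions s in {x,y} are encoded as bool: true = x, false = y. *)
From mathcomp Require Import all_boot all_order all_algebra.
Set Implicit Arguments. Unset Strict Implicit. Unset Printing Implicit Defensive.
Import Order.TTheory GRing.Theory Num.Theory.
Local Open Scope ring_scope.

Definition inF (R : realFieldType) (N : nat) (L : bool -> R) (lb : bool -> 'I_N -> R)
  (c l : bool -> 'I_N -> R) (z d : bool -> 'I_N -> 'I_N -> R) : Prop :=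
  (forall s (p q : 'I_N), p != q -> z s p q = 0 \/ z s p q = 1) /\
  (forall s (i j : 'I_N), i != j -> d s i j = d s j i) /\
  (forall (i j : 'I_N), i != j ->
     z true i j + z true j i + z false i j + z false j i >= 1) /\
  (forall (i j : 'I_N), i != j -> forall s (p q : 'I_N),
     (p = i /\ q = j) \/ (p = j /\ q = i) ->
       (2^-1 * l s p + lb s q * z s q p <= c s p/\
           c s p <= L s - 2^-1 * l s p - lb s q * z s p q/\
           c s p + 2^-1 * l s p <= c s q - 2^-1 * l s q + L s * (1 - z s p q)/\
           l s p >= lb s p/\
           z s i j + z s j i <= 1/\
           c s p + 2^-1 * l s p + L s * z s p q >=
             c s q - 2^-1 * l s q + (lb s p + lb s q) * (z s i j + z s j i)/\
           d s i j >= c s i - c s j/\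
           d s i j >= c s j - c s i)).

Definition pathM (R : realFieldType) (N : nat) (z : bool -> 'I_N -> 'I_N -> R)
  (s : bool) (m : nat) (t : nat -> 'I_N) : R :=
  1 + \sum_(1 <= xi < m.+2) (z s (t xi.-1) (t xi) - 1).

Definition pathGamma (R : realFieldType) (N : nat) (lb : bool -> 'I_N -> R)
  (s : bool) (m : nat) (t : nat -> 'I_N) : R :=
  \sum_(1 <= xi < m.+1) lb s (t xi).

(* Along the path, either some z^s_{t^(xi-1),t^xi} vanishes, and then M^s_P(z) <= 0 so the
   gamma-terms only weaken inequalities already valid on F; or all of them equal 1, and then
   M^s_P(z) = 1 while the boxes t^1, ..., t^m lie in order between i and j in direction s,
   so c^s_j - c^s_i >= (l^s_i + l^s_j)/2 + sum l^s_{t^xi} >= (l^s_i + l^s_j)/2 + gamma_P. *)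
From mathcomp Require Import all_boot all_order all_algebra.
From mathcomp Require Import zify lra.
Set Implicit Arguments. Unset Strict Implicit. Unset Printing Implicit Defensive.
Import Order.TTheory GRing.Theory Num.Theory.
Local Open Scope ring_scope.

Lemma sum_binary_subr1_le_or_all1 (R : realDomainType) (n : nat) (f : nat -> R) :
  (forall k, (1 <= k <= n)%N -> f k = 0 \/ f k = 1) ->
  \sum_(1 <= k < n.+1) (f k - 1) <= -1 \/ (forall k, (1 <= k <= n)%N -> f k = 1).
Proof.
elim: n => [|n IH] fbin; first by right=> k; lia.
rewrite big_nat_recr //=.
have [le_sum|all1] := IH (fun k hk => fbin k (ltac:(lia))).
  by left; have [->|->] := fbin n.+1 (ltac:(lia)); lra.
have -> : \sum_(1 <= k < n.+1) (f k - 1) = 0.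
  by rewrite big_nat_cond big1 // => k /andP[hk _]; rewrite all1 ?subrr.
have [fn0|fn1] := fbin n.+1 (ltac:(lia)); first by left; rewrite fn0; lra.
right=> k hk; case: (ltnP k n.+1) => hkn; first by apply: all1; lia.
by have -> : k = n.+1 by lia.
Qed.

Lemma chain_sum_le (R : realFieldType) (a w : nat -> R) (n : nat) :
  (forall k, (k < n.+1)%N -> a k + 2^-1 * w k <= a k.+1 - 2^-1 * w k.+1) ->
  a 0%N + 2^-1 * w 0%N + \sum_(1 <= k < n.+1) w k <= a n.+1 - 2^-1 * w n.+1.
Proof.
elim: n => [|n IH] sep; first by rewrite big_geq // addr0; apply: sep.
rewrite big_nat_recr //=.
have := IH (fun k hk => sep k (ltnW hk)); have := sep n.+1 (ltnSn _); lra.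
Qed.

Section RefinedUnaryFormulation.

Variables (R : realFieldType) (N : nat) (L : bool -> R) (lb : bool -> 'I_N -> R).
Variables (c l : bool -> 'I_N -> R) (z d : bool -> 'I_N -> 'I_N -> R).
Hypothesis HF : inF L lb c l z d.
Variable s : bool.
Hypotheses (HN : (1 < N)%N) (Hlb : forall k, 0 < lb s k).

Lemma inF_z_binary (a b : 'I_N) : a != b -> z s a b = 0 \/ z s a b = 1.
Proof. by case: HF => zbin _; apply: zbin. Qed.

Lemma inF_pair (a b : 'I_N) : a != b ->
  2^-1 * l s a + lb s b * z s b a <= c s a /\
  c s a <= L s - 2^-1 * l s a - lb s b * z s a b /\
  c s a + 2^-1 * l s a <= c s b - 2^-1 * l s b + L s * (1 - z s a b) /\
  lb s a <= l s a /\
  z s a b + z s b a <= 1 /\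
  c s b - 2^-1 * l s b + (lb s a + lb s b) * (z s a b + z s b a)
    <= c s a + 2^-1 * l s a + L s * z s a b /\
  c s a - c s b <= d s a b /\
  c s b - c s a <= d s a b.
Proof.
by case: HF => _ [_ [_ pair]] ab; apply: pair ab s a b (or_introl (conj erefl erefl)).
Qed.

Lemma inF_sep (a b : 'I_N) : a != b -> z s a b = 1 ->
  c s a + 2^-1 * l s a <= c s b - 2^-1 * l s b.
Proof.
move=> ab zab; have [_ [_ [sep _]]] := inF_pair ab.
by move: sep; rewrite zab subrr mulr0 addr0.
Qed.

Lemma inF_lb_le_len (k : 'I_N) : lb s k <= l s k.
Proof.
have [k' kk'] : exists k' : 'I_N, k != k'.
  have N0 : (0 < N)%N by apply: ltnW.
  case: (eqVneq k (Ordinal N0)) => [->|ne]; last by exists (Ordinal N0).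
  by exists (Ordinal HN).
by have [_ [_ [_ [lbl _]]]] := inF_pair kk'.
Qed.

Variables (i j p q : 'I_N).

(* The inequalities of the proposition, with gamma_P * M^s_P(z) replaced by X. *)
Definition pair_cuts (X : R) : Prop :=
  d s i j >= 2^-1 * (l s i + l s j) - L s * (1 - z s i j - z s j i) + X /\
  d s i j >= c s p - c s q + l s p + lb s q * (z s i j + z s j i)
             - L s * (1 - z s p q) + X /\
  d s i j >= c s i - c s j + (lb s i + lb s j) * z s i j + X /\
  2 * d s i j >= l s p + lb s q * (z s i j + z s j i)
             - L s * (1 - z s i j - z s j i) + 2 * X /\
  2^-1 * l s j + lb s i * z s i j + X <= c s j /\
  c s i + X <= L s - 2^-1 * l s i - lb s j * z s i j /\
  c s i + 2^-1 * l s i + X <= c s j - 2^-1 * l s j + L s * (1 - z s i j).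

Lemma pair_cuts_shift (X : R) : X <= 0 -> pair_cuts 0 -> pair_cuts X.
Proof.
move=> X_le0 [C1 [C2 [C3 [C4 [C5 [C6 C7]]]]]].
by split; [lra|split; [lra|split; [lra|split; [lra|split; [lra|split; lra]]]]].
Qed.

Hypotheses (Hij : i != j) (Hpq : (p = i /\ q = j) \/ (p = j /\ q = i)).

Lemma inF_pair_cuts : pair_cuts 0.
Proof.
have Hji : j != i by rewrite eq_sym.
have [A1 [A2 [A3 [A4 [A5 [A6 [A7 A8]]]]]]] := inF_pair Hij.
have [B1 [B2 [B3 [B4 [B5 [B6 _]]]]]] := inF_pair Hji.
rewrite /pair_cuts; case: Hpq => [[-> ->]|[-> ->]].
all: case: (inF_z_binary Hij) => zij; case: (inF_z_binary Hji) => zji.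
all: rewrite zij zji in A1 A2 A3 A5 A6 B1 B2 B3 B5 B6 *.
all: by split; [lra|split; [lra|split; [lra|split; [lra|split; [lra|split; lra]]]]].
Qed.

Lemma inF_pair_cuts_ordered (X : R) :
  c s i + 2^-1 * l s i + X <= c s j - 2^-1 * l s j -> pair_cuts X.
Proof.
move=> ordered; have Hji : j != i by rewrite eq_sym.
have [A1 [A2 [A3 [A4 [A5 [A6 [A7 A8]]]]]]] := inF_pair Hij.
have [B1 [B2 [B3 [B4 [B5 _]]]]] := inF_pair Hji.
have lbi := Hlb i; have lbj := Hlb j.
rewrite /pair_cuts; case: Hpq => [[-> ->]|[-> ->]].
all: case: (inF_z_binary Hij) => zij; case: (inF_z_binary Hji) => zji.
all: rewrite zij zji in A1 A2 A3 A5 A6 B1 B2 B3 B5 *.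
all: by split; [lra|split; [lra|split; [lra|split; [lra|split; [lra|split; lra]]]]].
Qed.

Variables (m : nat) (t : nat -> 'I_N).
Hypotheses (Ht0 : t 0%N = i) (Htm : t m.+1 = j).
Hypothesis Htinj : forall a b : nat, (a <= m.+1)%N -> (b <= m.+1)%N -> t a = t b -> a = b.

Lemma path_step_neq (xi : nat) : (1 <= xi <= m.+1)%N -> t xi.-1 != t xi.
Proof. by move=> hxi; apply/eqP => /Htinj; lia. Qed.

Lemma pathM_le0_or_ordered :
  let M := pathM z s m t in
  let g := pathGamma lb s m t in
  g * M <= 0 \/ (g * M = g /\ c s i + 2^-1 * l s i + g <= c s j - 2^-1 * l s j).
Proof.
move=> M g.
have g_ge0 : 0 <= g by apply: sumr_ge0 => k _; apply: ltW.
have [le_sum|all1] := sum_binary_subr1_le_or_all1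
  (fun xi hxi => inF_z_binary (path_step_neq hxi)).
  by left; apply: mulr_ge0_le0 => //; rewrite /M /pathM; lra.
right; split.
  rewrite /M /pathM big_nat_cond big1 ?addr0 ?mulr1 // => k /andP[hk _].
  by rewrite all1 ?subrr.
have ordered := chain_sum_le (a := fun k => c s (t k)) (w := fun k => l s (t k)) (n := m)
  (fun k hk => inF_sep (path_step_neq (xi := k.+1) (ltac:(lia))) (all1 k.+1 (ltac:(lia)))).
have g_le : g <= \sum_(1 <= k < m.+1) l s (t k).
  by apply: ler_sum => k _; apply: inF_lb_le_len.
by move: ordered; rewrite /= Ht0 Htm; lra.
Qed.

Lemma inF_path_cuts : pair_cuts (pathGamma lb s m t * pathM z s m t).
Proof.
have [gM_le0|[-> ordered]] := pathM_le0_or_ordered.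
  exact: pair_cuts_shift gM_le0 inF_pair_cuts.
exact: inF_pair_cuts_ordered ordered.
Qed.

End RefinedUnaryFormulation.

Theorem proposition7p3 (R : realFieldType) (N : nat) (HN : (2 <= N)%N)
  (L : bool -> R) (HL : forall s, 0 < L s)
  (lb : bool -> 'I_N -> R) (Hlb : forall s k, 0 < lb s k)
  (i j : 'I_N) (Hij : i != j)
  (m : nat) (Hm : (1 <= m)%N) (t : nat -> 'I_N)
  (Ht0 : t 0%N = i) (Htm : t m.+1 = j)
  (Htinj : forall a b : nat, (a <= m.+1)%N -> (b <= m.+1)%N -> t a = t b -> a = b)
  (s : bool) (p q : 'I_N) (Hpq : (p = i /\ q = j) \/ (p = j /\ q = i))
  (c l : bool -> 'I_N -> R) (z d : bool -> 'I_N -> 'I_N -> R)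
  (HF : inF L lb c l z d) :
  let M := pathM z s m t in
  let g := pathGamma lb s m t in
  (d s i j >= 2^-1 * (l s i + l s j) - L s * (1 - z s i j - z s j i) + g * M/\
      d s i j >= c s p - c s q + l s p + lb s q * (z s i j + z s j i)
                 - L s * (1 - z s p q) + g * M/\
      d s i j >= c s i - c s j + (lb s i + lb s j) * z s i j + g * M/\
      2 * d s i j >= l s p + lb s q * (z s i j + z s j i)
                 - L s * (1 - z s i j - z s j i) + 2 * g * M/\
      2^-1 * l s j + lb s i * z s i j + g * M <= c s j/\
      c s i + g * M <= L s - 2^-1 * l s i - lb s j * z s i j/\
      c s i + 2^-1 * l s i + g * M <= c s j - 2^-1 * l s j + L s * (1 - z s i j)).
Proof.
move=> M g; rewrite -mulrA.
exact: (inF_path_cuts HF HN (Hlb s) Hij Hpq Ht0 Htm Htinj).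
Qed.
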